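(* Let $\lambda_0\ge0$ be the BS intensity of a buyer MNO-0 and $\lambda_i>0$, $i\in\mathcal N$, those of the sellers it buys from, $\lambda=\lambda_0+\sum_{i\in\mathcal N}\lambda_i$, $w_i=\lambda_i/\lambda$, $\bar\lambda=\sum_{i\in\mathcal N\cup\{0\}}w_i\lambda_i$, $\beta'=1+\bar\lambda(\beta-1)/\lambda$, $\theta=\frac{\alpha}{2\pi}\frac{B^{2/\alpha}}{\Gamma(2/\alpha)}$ with $B=T\sigma^2/p$, and let the approximate coverage probability be $$\widetilde P_c=\Big[1+\frac{\bar\lambda(\beta-1)}{\lambda}+\frac{\theta}{\lambda}\Big]^{-1}.$$ Let $0<\epsilon<1$ with $1-\epsilon>1/\beta'$. If the QoS condition $\widetilde P_c\ge1-\epsilon$ holds, then $$\sum_{i\in\mathcal N\cup\{0\}}\Big(1-\frac{w_i(\beta-1)(1-\epsilon)}{\epsilon}\Big)\lambda_i\ge\frac{\theta(1-\epsilon)}{\epsilon}.$$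
   Context: This is the model where interference and association are decoupled: users associate with the nearest BS among intensity $\lambda$, while interfering BSs have intensity $\bar\lambda$. Parameters: $\alpha>2$ path-loss exponent, $T>0$ SINR threshold, $\sigma^2>0$ noise variance, $p>0$ transmit power, $\beta>0$ interference constant (for Rayleigh interfering links $\beta=1+\rho(T,\alpha)$, $\rho(T,\alpha)=T^{2/\alpha}\int_{T^{-2/\alpha}}^\infty(1+u^{\alpha/2})^{-1}du$). $\Gamma$ is the Gamma function. *)

From Stdlib Require Import Reals.
From Coquelicot Require Import Coquelicot.
Open Scope R_scope.

Definition Gamma (s : R) : R :=
  RInt_gen (fun t => Rpower t (s - 1) * exp (- t)) (at_right 0) (Rbar_locally p_infty).

Definition theta (alpha T sigma2 p : R) : R :=
  alpha / (2 * PI) * Rpower (T * sigma2 / p) (2 / alpha) / Gamma (2 / alpha).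

(* Buyer is index 0, sellers are indices 1..n; lam i is the BS intensity of MNO-i. *)
Definition lam_tot (lam : nat -> R) (n : nat) : R := sum_n lam n.
Definition wgt (lam : nat -> R) (n : nat) (i : nat) : R := lam i / lam_tot lam n.
Definition lam_bar (lam : nat -> R) (n : nat) : R := sum_n (fun i => wgt lam n i * lam i) n.
Definition beta' (lam : nat -> R) (n : nat) (beta : R) : R :=
  1 + lam_bar lam n * (beta - 1) / lam_tot lam n.
Definition Pc_approx (lam : nat -> R) (n : nat) (beta th : R) : R :=
  / (1 + lam_bar lam n * (beta - 1) / lam_tot lam n + th / lam_tot lam n).

(* The QoS condition [Pc >= 1 - eps] is equivalent, after clearing the denominators of
   [Pc], to [(1 - eps) (lambda + lambda_bar (beta - 1) + theta) <= lambda]; dividing by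
   [eps] and expanding [lambda_bar] as the sum of [w_i lambda_i] turns it into the claimed
   lower bound on the weighted sum of intensities. Only [lambda > 0] and [0 < eps < 1] are
   used: the value of [theta] plays no role, and the feasibility hypothesis
   [1 - eps > 1 / beta'] only guarantees that the bound can be met. *)

From Stdlib Require Import Reals Lra.
From Coquelicot Require Import Coquelicot.
Open Scope R_scope.

Lemma Rinv_pos_inv (x : R) : 0 < / x -> 0 < x.
Proof. intros Hx. rewrite <- (Rinv_inv x). now apply Rinv_0_lt_compat. Qed.

Lemma Rmult_le_1_of_le_inv (q x : R) : 0 < q -> q <= / x -> q * x <= 1.
Proof.
  intros Hq Hqx.
  assert (Hx : 0 < x) by (apply Rinv_pos_inv; lra).
  rewrite <- (Rinv_l x) by lra.
  now apply Rmult_le_compat_r; [lra|].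
Qed.

Lemma sum_n_one_minus_wgt (lam : nat -> R) (n : nat) (c : R) :
  sum_n (fun i => (1 - wgt lam n i * c) * lam i) n = lam_tot lam n - c * lam_bar lam n.
Proof.
  unfold lam_tot, lam_bar, Rminus.
  rewrite Ropp_mult_distr_l, <- (sum_n_mult_l (K := R_Ring)).
  rewrite <- (sum_n_plus (G := R_AbelianMonoid)).
  apply sum_n_ext; intros i; unfold plus, mult; simpl; ring.
Qed.

Lemma le_lam_tot_of_Pc_approx_ge (lam : nat -> R) (n : nat) (beta th q : R) :
  0 < lam_tot lam n -> 0 < q -> Pc_approx lam n beta th >= q ->
  q * (lam_tot lam n + lam_bar lam n * (beta - 1) + th) <= lam_tot lam n.
Proof.
  unfold Pc_approx; set (L := lam_tot lam n); set (lb := lam_bar lam n).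
  intros HL Hq HP.
  assert (HD := Rmult_le_1_of_le_inv _ _ Hq (Rge_le _ _ HP)).
  replace (q * (L + lb * (beta - 1) + th))
    with (q * (1 + lb * (beta - 1) / L + th / L) * L) by (field; lra).
  apply Rle_trans with (1 * L); [apply Rmult_le_compat_r|]; lra.
Qed.

Theorem proposition12 (alpha T sigma2 p beta eps : R) (n : nat) (lam : nat -> R) :
  2 < alpha -> 0 < T -> 0 < sigma2 -> 0 < p -> 0 < beta ->
  0 <= lam 0%nat ->
  (forall i : nat, (1 <= i <= n)%nat -> 0 < lam i) ->
  0 < lam_tot lam n ->
  0 < eps < 1 ->
  1 - eps > / beta' lam n beta ->
  Pc_approx lam n beta (theta alpha T sigma2 p) >= 1 - eps ->
  sum_n (fun i => (1 - wgt lam n i * (beta - 1) * (1 - eps) / eps) * lam i) n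
    >= theta alpha T sigma2 p * (1 - eps) / eps.
Proof.
  intros _ _ _ _ _ _ _ HL Heps _ HP.
  set (th := theta alpha T sigma2 p) in *.
  pose proof (le_lam_tot_of_Pc_approx_ge lam n beta th (1 - eps) HL ltac:(lra) HP) as HQ.
  assert (Hsum : sum_n (fun i => (1 - wgt lam n i * (beta - 1) * (1 - eps) / eps) * lam i) n
                 = lam_tot lam n - (beta - 1) * (1 - eps) / eps * lam_bar lam n).
  { rewrite <- sum_n_one_minus_wgt. apply sum_n_ext; intros i; simpl; unfold Rdiv; ring. }
  rewrite Hsum.
  apply Rle_ge, (Rmult_le_reg_r eps); [lra|].
  replace (th * (1 - eps) / eps * eps) with (th * (1 - eps)) by (field; lra).
  replace ((lam_tot lam n - (beta - 1) * (1 - eps) / eps * lam_bar lam n) * eps)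
    with (eps * lam_tot lam n - (1 - eps) * (lam_bar lam n * (beta - 1))) by (field; lra).
  lra.
Qed.
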